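(* Let $K$ be a field, $A\subset K$ and $B\subset K$ finite sets with $|A|=m$, $|B|=n$. Let $0\le p\le m$, $0\le q\le n$, set $d:=p+q$ and assume $d\le\min\{m-1,n-1\}$. Then $$\operatorname{Syl}_{p,q}(A,B)=(-1)^{p(m-d)}\binom{d}{p}\operatorname{Syl}_{0,d}(A,B).$$
   Context: For finite sets $Y,Z$, $\mathcal{R}(Y,Z):=\prod_{y\in Y,z\in Z}(y-z)$ (equal to $1$ if $Y$ or $Z$ is empty), and $\mathcal{R}(x,Z):=\mathcal{R}(\{x\},Z)$. For $0\le p\le m$, $0\le q\le n$, $$\operatorname{Syl}_{p,q}(A,B)(x):=\sum_{\substack{A'\subset A,\ B'\subset B\\ |A'|=p,\ |B'|=q}}\mathcal{R}(A',B')\,\mathcal{R}(A\setminus A',B\setminus B')\,\frac{\mathcal{R}(x,A')\,\mathcal{R}(x,B')}{\mathcal{R}(A',A\setminus A')\,\mathcal{R}(B',B\setminus B')}.$$ *)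

From HB Require Import structures.
From mathcomp Require Import all_boot all_order all_algebra.
From mathcomp Require Import finmap.
Set Implicit Arguments. Unset Strict Implicit. Unset Printing Implicit Defensive.
Import Order.TTheory GRing.Theory.
Local Open Scope ring_scope.
Local Open Scope fset_scope.

Section Syl.
Variable K : fieldType.

Definition Rres (Y Z : {fset K}) : K :=
  \prod_(y <- Y) \prod_(z <- Z) (y - z).

Definition RresX (Z : {fset K}) : {poly K} :=
  \prod_(z <- Z) ('X - z%:P).

Definition Syl (p q : nat) (A B : {fset K}) : {poly K} :=
  \sum_(A' <- fpowerset A | #|` A'| == p)
   \sum_(B' <- fpowerset B | #|` B'| == q)
     ((Rres A' B' * Rres (A `\` A') (B `\` B'))
        / (Rres A' (A `\` A') * Rres B' (B `\` B')))
       *: (RresX A' * RresX B').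

End Syl.

From HB Require Import structures.
From mathcomp Require Import all_boot all_order all_algebra.
From mathcomp Require Import fingroup perm.
From mathcomp Require Import finmap.
From mathcomp Require Import ring zify.
From mathcomp Require Import fraction.
Set Implicit Arguments. Unset Strict Implicit. Unset Printing Implicit Defensive.
Import GRing.Theory.
Local Open Scope ring_scope.
Local Open Scope fset_scope.

(* For disjoint A and B, with C = A ∪ B and d = p + q, each term of Syl_{p,q}
   is, up to the sign (-1)^(q(m-p)) and the factor R(A,B), the weight
   R(x,S) / R(S, C \ S) of S = A' ∪ B'.  Writing the inverse discriminant of S
   through the square of its Vandermonde determinant turns the sum of these
   weights over |A'| = p, |B'| = q into a signed sum over the d-tuples of points
   of C with exactly p entries in A.  As sum_(c in C) c^k / prod_(c' <> c) (c - c')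
   vanishes for k <= |C| - 2, moving one entry of a tuple from A to B only flips
   the sign, which produces the factor (-1)^p binom(d,p).
   For arbitrary A and B, shifting B by an indeterminate X makes the two sets
   disjoint in K(X).  The identity holds there and, the denominators of Syl
   only involving differences inside A or inside B, it descends to K[X], where
   it can be evaluated at X = 0. *)

(** * Finite sets and big operators *)

Lemma big_fsetU_disjoint (R : Type) (idx : R) (op : Monoid.com_law idx)
    (I : choiceType) (X Y : {fset I}) (F : I -> R) : [disjoint X & Y] ->
  \big[op/idx]_(i <- X `|` Y) F i =
    op (\big[op/idx]_(i <- X) F i) (\big[op/idx]_(i <- Y) F i).
Proof.
move=> dXY; rewrite -big_cat; apply/perm_big/uniq_perm => [||x].
- exact: fset_uniq.
- by rewrite cat_uniq !fset_uniq /= andbT; apply/hasPn => x /(fdisjointP_sym dXY).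
- by rewrite mem_cat !inE.
Qed.

Lemma prodrN_seq (R : comPzRingType) (I : Type) (r : seq I) (F : I -> R) :
  \prod_(i <- r) - F i = (-1) ^+ size r * \prod_(i <- r) F i.
Proof.
elim: r => [|x r IH]; first by rewrite !big_nil mulr1.
by rewrite !big_cons IH exprS; ring.
Qed.

Lemma prodr_const_seq (R : pzSemiRingType) (I : Type) (r : seq I) (x : R) :
  \prod_(i <- r) x = x ^+ size r.
Proof. by rewrite big_const_seq count_predT; elim: (size r) => //= n ->; rewrite exprS. Qed.

Lemma fdisjointXD (T : choiceType) (X Y : {fset T}) : [disjoint X & Y `\` X].
Proof. by apply/fdisjointP => x; rewrite !inE => ->. Qed.

Lemma fsetUDK (T : choiceType) (X Y : {fset T}) : X `<=` Y -> X `|` (Y `\` X) = Y.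
Proof. by move=> XY; rewrite fsetUDl fsetDv fsetD0; apply/fsetUidPr. Qed.

Lemma fsubset2_eq (T : choiceType) (X Y X' Y' : {fset T}) :
  (#|` X'| + #|` Y'| = #|` X| + #|` Y|)%N ->
  (X `<=` X') && (Y `<=` Y') = (X' == X) && (Y' == Y).
Proof.
move=> card_eq; apply/andP/andP => [[sX sY]|[/eqP-> /eqP->]]; last by rewrite !fsubset_refl.
have := fsubset_leq_card sX; have := fsubset_leq_card sY.
by rewrite !(eq_sym X') !(eq_sym Y') !eqEfcard sX sY /=; lia.
Qed.

Lemma sum_fpowerset_eq1 (V : nmodType) (T : choiceType) (X Y : {fset T})
    (P : pred {fset T}) (v : V) : Y `<=` X ->
  \sum_(Z <- fpowerset X | P Z) (if Z == Y then v else 0) = if P Y then v else 0.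
Proof.
move=> YX; rewrite big_mkcond (bigD1_seq Y) ?fpowersetE ?fset_uniq //= eqxx.
by rewrite big1 ?addr0 // => Z /negbTE->; rewrite if_same.
Qed.

Lemma eq_sum_fpowerset2 (V : nmodType) (T : choiceType) (X Y : {fset T}) p q
    (F G : {fset T} -> {fset T} -> V) :
  (forall X' Y', X' `<=` X -> Y' `<=` Y -> #|` X'| = p -> #|` Y'| = q ->
     F X' Y' = G X' Y') ->
  \sum_(X' <- fpowerset X | #|` X'| == p) \sum_(Y' <- fpowerset Y | #|` Y'| == q) F X' Y' =
  \sum_(X' <- fpowerset X | #|` X'| == p) \sum_(Y' <- fpowerset Y | #|` Y'| == q) G X' Y'.
Proof.
move=> eqFG; rewrite big_seq_cond [RHS]big_seq_cond; apply: eq_bigr => X'.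
rewrite fpowersetE => /andP[sX' /eqP cX'].
rewrite big_seq_cond [RHS]big_seq_cond; apply: eq_bigr => Y'.
by rewrite fpowersetE => /andP[sY' /eqP cY']; apply: eqFG.
Qed.

Lemma perm_enum_finmem_fset (T : choiceType) (Y : {fset T}) :
  perm_eq (enum_finmem (mem Y)) Y.
Proof.
by apply: uniq_perm; rewrite ?enum_finmem_uniq ?fset_uniq // => x; rewrite enum_finmemE.
Qed.

Section InjectiveImage.
Variables (T T' : choiceType) (f : T -> T').
Hypothesis f_inj : injective f.
Implicit Types X Y Z : {fset T}.

Lemma big_imfset_inj (R : Type) (idx : R) (op : Monoid.com_law idx) Y (G : T' -> R) :
  \big[op/idx]_(y <- f @` Y) G y = \big[op/idx]_(y <- Y) G (f y).
Proof.
by rewrite big_imfset => [|x y _ _ /f_inj//]; apply/perm_big/perm_enum_finmem_fset.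
Qed.

Lemma card_imfset_inj Y : #|` f @` Y| = #|` Y|.
Proof. by apply/eqP/card_in_imfsetP => x y _ _ /f_inj. Qed.

Lemma imfsetD Y Z : f @` (Y `\` Z) = f @` Y `\` f @` Z.
Proof.
apply/fsetP => x; rewrite inE; apply/imfsetP/andP => /= [[a]|[xZ /imfsetP[a /= aY ex]]].
  by rewrite inE => /andP[aZ aY] ->; rewrite !(mem_imfset _ _ f_inj).
exists a => //; rewrite inE aY andbT; apply: contra xZ => aZ.
by rewrite ex (mem_imfset _ _ f_inj).
Qed.

Lemma fpowerset_imfset X :
  fpowerset (f @` X) = [fset f @` Y | Y : {fset T} in fpowerset X].
Proof.
apply/fsetP => Z; rewrite fpowersetE; apply/idP/imfsetP => /= [ZX|[Y]]; last first.
  rewrite fpowersetE => YX ->; apply/fsubsetP => _ /imfsetP[a /= aY ->].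
  by rewrite in_imfset // (fsubsetP YX).
exists [fset a in X | f a \in Z].
  by rewrite fpowersetE; apply/fsubsetP => a; rewrite !inE => /andP[].
apply/fsetP => x; apply/idP/imfsetP => /= [xZ|[a]]; last by rewrite !inE => /andP[_ ?] ->.
by have /imfsetP[a /= aX ex] := fsubsetP ZX x xZ; exists a; rewrite // !inE aX -ex.
Qed.

Lemma sum_fpowerset_imfset (V : nmodType) X p (G : {fset T'} -> V) :
  \sum_(Z <- fpowerset (f @` X) | #|` Z| == p) G Z =
  \sum_(Y <- fpowerset X | #|` Y| == p) G (f @` Y).
Proof.
have imf_inj : injective (fun Y : {fset T} => f @` Y).
  move=> Y Z eYZ; apply/fsetP => x.
  by rewrite -(mem_imfset imfset_key (mem Y) f_inj) eYZ mem_imfset.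
rewrite fpowerset_imfset big_mkcond big_imfset => [|Y Z _ _ /imf_inj//].
rewrite (perm_big _ (perm_enum_finmem_fset _)) [RHS]big_mkcond.
by apply: eq_bigr => Y _; rewrite card_imfset_inj.
Qed.

End InjectiveImage.

(** * Resultants and Lagrange interpolation *)

Section Resultants.
Variable K : fieldType.
Implicit Types X Y Z : {fset K}.

Lemma RresUl X Y Z : [disjoint X & Y] -> Rres (X `|` Y) Z = Rres X Z * Rres Y Z.
Proof. by move=> dXY; rewrite /Rres big_fsetU_disjoint. Qed.

Lemma RresUr X Y Z : [disjoint Y & Z] -> Rres X (Y `|` Z) = Rres X Y * Rres X Z.
Proof.
by move=> dYZ; rewrite /Rres -big_split; apply: eq_bigr => x _; rewrite big_fsetU_disjoint.
Qed.

Lemma RresC X Y : Rres Y X = (-1) ^+ (#|` X| * #|` Y|) * Rres X Y.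
Proof.
rewrite /Rres exchange_big /=.
under eq_bigr => x _ do under eq_bigr => y _ do rewrite -opprB.
under eq_bigr => x _ do rewrite prodrN_seq.
by rewrite big_split /= prodr_const_seq -exprM mulnC.
Qed.

Lemma Rres_neq0 X Y : [disjoint X & Y] -> Rres X Y != 0.
Proof.
move=> dXY; rewrite prodf_seq_neq0; apply/allP => x xX /=.
rewrite prodf_seq_neq0; apply/allP => y yY /=; rewrite subr_eq0.
by apply: contraTneq yY => <-; apply: (fdisjointP dXY).
Qed.

End Resultants.

Section Lagrange.
Variable K : fieldType.
Implicit Types C S : {fset K}.

Definition lagr_den C (s : K) : K := \prod_(c <- C `\ s) (s - c).

Lemma lagr_den_neq0 C s : lagr_den C s != 0.
Proof.
rewrite prodf_seq_neq0; apply/allP => c cC /=; rewrite subr_eq0.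
by apply: contraTneq cC => ->; rewrite fsetD11.
Qed.

Lemma size_RresX_fsetD1 C c : c \in C -> size (RresX (C `\ c)) = #|` C|.
Proof. by move=> cC; rewrite size_prod_XsubC [in RHS](cardfsD1 c) cC. Qed.

Lemma horner_RresX_fsetD1 C c c0 : c0 \in C ->
  (RresX (C `\ c)).[c0] = if c0 == c then lagr_den C c else 0.
Proof.
move=> c0C; case: eqP => [->|c0c].
  by rewrite horner_prod; under eq_bigr do rewrite hornerXsubC.
by apply/rootP; rewrite root_prod_XsubC !inE c0C andbT; apply/eqP.
Qed.

Lemma lagrange_interp C (P : {poly K}) : (size P <= #|` C|)%N ->
  P = \sum_(c <- C) (P.[c] / lagr_den C c) *: RresX (C `\ c).
Proof.
move=> sP; set Q := \sum_(c <- C) _.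
have rootPQ : all (root (P - Q)) C.
  apply/allP => c0 c0C; rewrite /root hornerD hornerN horner_sum subr_eq0.
  rewrite (big_fsetD1 c0) //= hornerZ horner_RresX_fsetD1 // eqxx.
  rewrite mulfVK ?lagr_den_neq0 // big1_fset ?addr0 // => c cC0 _.
  rewrite hornerZ horner_RresX_fsetD1 //; case: eqP => [ec|]; last by rewrite mulr0.
  by move: cC0; rewrite ec !inE eqxx.
apply/eqP; rewrite -subr_eq0; apply/negPn/negP => /max_poly_roots.
move=> /(_ _ rootPQ (fset_uniq C)); apply/negP; rewrite -leqNgt.
apply: leq_trans (size_polyD _ _) _; rewrite geq_max size_polyN sP /=.
apply: leq_trans (size_sum _ _ _) _; apply/bigmax_leqP_seq => c cC _.
by apply: leq_trans (size_scale_leq _ _) _; rewrite size_RresX_fsetD1.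
Qed.

Lemma sum_expr_lagr_den C k : (k.+2 <= #|` C|)%N ->
  \sum_(c <- C) c ^+ k / lagr_den C c = 0.
Proof.
move=> hk; have sX : (size ('X^k : {poly K}) <= #|` C|)%N.
  by rewrite size_polyXn ltnW.
have := congr1 (coefp #|` C|.-1) (lagrange_interp sX).
rewrite /= coefXn coef_sum; have -> : (#|` C|.-1 == k) = false.
  by apply/negbTE; lia.
rewrite /= mulr0n => E; rewrite [RHS]E !big_seq; apply: eq_bigr => c cC.
rewrite coefZ hornerXn.
have /monicP := monic_prod_XsubC (C `\ c) xpredT id.
by rewrite lead_coefE size_RresX_fsetD1 // /RresX => ->; rewrite mulr1.
Qed.

End Lagrange.

(** * The disjoint case *)

Section Weights.
Variable K : fieldType.
Implicit Types C S : {fset K}.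

Definition lagr_lin C (s : K) : {poly K} := (lagr_den C s)^-1 *: ('X - s%:P).

Definition Rdisc S : K := \prod_(s <- S) \prod_(s' <- S `\ s) (s - s').

Definition lagr_weight C S : {poly K} := (Rres S (C `\` S))^-1 *: RresX S.

Lemma Rdisc_neq0 S : Rdisc S != 0.
Proof.
rewrite prodf_seq_neq0; apply/allP => s sS /=.
rewrite prodf_seq_neq0; apply/allP => s' s'S /=; rewrite subr_eq0.
by apply: contraTneq s'S => <-; rewrite fsetD11.
Qed.

Lemma prod_lagr_den C S : S `<=` C ->
  \prod_(s <- S) lagr_den C s = Rdisc S * Rres S (C `\` S).
Proof.
move=> SC; rewrite -big_split; apply: eq_big_seq => s sS /=.
rewrite -big_fsetU_disjoint; last by apply/fdisjointP => x; rewrite !inE => /andP[_ ->].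
apply: eq_fbigl => x; rewrite !inE.
case: (x =P s) => [->|_] /=; first by rewrite sS.
by case: (x \in S) (fsubsetP SC x) => //= ->.
Qed.

Lemma lagr_weight_lagr_lin C S : S `<=` C ->
  lagr_weight C S = Rdisc S *: \prod_(s <- S) lagr_lin C s.
Proof.
move=> SC; rewrite scaler_prod prodfV prod_lagr_den // scalerA invfM mulrA.
by rewrite mulfV ?Rdisc_neq0 ?mul1r.
Qed.

End Weights.

Section SylTerms.
Variables (K : fieldType) (A B : {fset K}).
Hypothesis dAB : [disjoint A & B].

Lemma fdisjoint_subsets A' B' : A' `<=` A -> B' `<=` B -> [disjoint A' & B'].
Proof. by move=> hA hB; apply: fdisjointWl hA (fdisjointWr hB dAB). Qed.

Lemma fsetDUU A' B' : A' `<=` A -> B' `<=` B ->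
  (A `|` B) `\` (A' `|` B') = (A `\` A') `|` (B `\` B').
Proof.
move=> /fsubsetP hA /fsubsetP hB; apply/fsetP => x; rewrite !inE.
have := fdisjointP dAB x; move: (hA x) (hB x).
by case: (x \in A'); case: (x \in B'); case: (x \in A); case: (x \in B) => //=; auto.
Qed.

Lemma Rres_split A' B' : A' `<=` A -> B' `<=` B ->
  Rres A B = Rres A' B' * Rres A' (B `\` B') *
             (Rres (A `\` A') B' * Rres (A `\` A') (B `\` B')).
Proof.
move=> hA hB.
by rewrite -{1}(fsetUDK hA) -{1}(fsetUDK hB) RresUl ?fdisjointXD // !RresUr ?fdisjointXD.
Qed.

Lemma Syl_term_lagr_weight A' B' : A' `<=` A -> B' `<=` B ->
  ((Rres A' B' * Rres (A `\` A') (B `\` B')) /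
     (Rres A' (A `\` A') * Rres B' (B `\` B'))) *: (RresX A' * RresX B')
  = ((-1) ^+ (#|` B'| * (#|` A| - #|` A'|)) * Rres A B) *:
      lagr_weight (A `|` B) (A' `|` B').
Proof.
move=> hA hB; have dA'B' := fdisjoint_subsets hA hB.
have dDD : [disjoint A `\` A' & B `\` B'] by apply: fdisjoint_subsets; apply: fsubsetDl.
rewrite /lagr_weight fsetDUU // /RresX big_fsetU_disjoint //= scalerA; congr (_ *: _).
rewrite (Rres_split hA hB) RresUl // !RresUr ?fdisjointXD //.
rewrite (RresC (A `\` A') B') cardfsDS // mulnC.
have nA : Rres A' (A `\` A') != 0 by apply: Rres_neq0; apply: fdisjointXD.
have nB : Rres B' (B `\` B') != 0 by apply: Rres_neq0; apply: fdisjointXD.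
have nAB : Rres A' (B `\` B') != 0.
  by apply: Rres_neq0; apply: fdisjoint_subsets (fsubsetDl _ _).
have nBA : Rres (A `\` A') B' != 0.
  by apply: Rres_neq0; apply: fdisjoint_subsets (fsubsetDl _ _) _.
set sg := (-1) ^+ _.
have nsg : sg != 0 by rewrite signr_eq0.
by field; rewrite ?nA ?nB ?nAB ?nBA ?nsg.
Qed.

Definition lagr_weight_sum p q : {poly K} :=
  \sum_(A' <- fpowerset A | #|` A'| == p) \sum_(B' <- fpowerset B | #|` B'| == q)
    lagr_weight (A `|` B) (A' `|` B').

Lemma Syl_lagr_weight_sum p q :
  Syl p q A B = ((-1) ^+ (q * (#|` A| - p)) * Rres A B) *: lagr_weight_sum p q.
Proof.
rewrite /Syl /lagr_weight_sum scaler_sumr; under [RHS]eq_bigr do rewrite scaler_sumr.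
apply: eq_sum_fpowerset2 => A' B' sA' sB' <- <-.
exact: Syl_term_lagr_weight.
Qed.

End SylTerms.

Section Tuples.
Variables (K : fieldType) (C : {fset K}) (d : nat).
Implicit Types (t : {ffun 'I_d -> C}) (S : {fset K}).

Definition vdm t : K := \det (\matrix_(i, j) val (t i) ^+ j).

Definition tuple_term t : {poly K} :=
  vdm t *: \prod_i (val (t i) ^+ i *: lagr_lin C (val (t i))).

Definition valued_in S (_ : 'I_d) : pred C := fun c => val c \in S.

Definition moment (P : pred C) (k : nat) : {poly K} :=
  \sum_(c : C | P c) val c ^+ k *: lagr_lin C (val c).

Lemma sum_vdm_family (V : comAlgType K) (Q : 'I_d -> pred C) (G : 'I_d -> C -> V) :
  \sum_(t in family Q) vdm t *: \prod_i G i (t i) =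
  \sum_(s : 'S_d) (-1) ^+ s *: \prod_i \sum_(c : C | Q i c) val c ^+ s i *: G i c.
Proof.
have vdmE t : vdm t *: \prod_i G i (t i) =
    \sum_(s : 'S_d) (-1) ^+ s *: \prod_i (val (t i) ^+ s i *: G i (t i)).
  rewrite /vdm /determinant scaler_suml; apply: eq_bigr => s _.
  by rewrite scaler_prod -scalerA; under eq_bigr do rewrite mxE.
under eq_bigr do rewrite vdmE.
by rewrite exchange_big; apply: eq_bigr => s _; rewrite -scaler_sumr bigA_distr_big_dep.
Qed.

Lemma sum_tuple_term_family (Q : 'I_d -> pred C) :
  \sum_(t in family Q) tuple_term t =
  \sum_(s : 'S_d) (-1) ^+ s *: \prod_i moment (Q i) (s i + i).
Proof.
rewrite (sum_vdm_family _ (fun i c => val c ^+ i *: lagr_lin C (val c))).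
apply: eq_bigr => s _; congr (_ *: _).
by apply: eq_bigr => i _; apply: eq_bigr => c _; rewrite scalerA exprD.
Qed.

Lemma moment_predT k : (k.+3 <= #|` C|)%N -> moment predT k = 0.
Proof.
move=> hk; rewrite /moment -(big_seq_fsetE _ C predT (fun c => c ^+ k *: lagr_lin C c)).
have -> : \sum_(c <- C | predT c) c ^+ k *: lagr_lin C c =
    (\sum_(c <- C) c ^+ k / lagr_den C c) *: 'X -
    (\sum_(c <- C) c ^+ k.+1 / lagr_den C c)%:P.
  rewrite scaler_suml rmorph_sum -sumrB; apply: eq_bigr => c _.
  by rewrite /lagr_lin scalerA scalerBr scale_polyC mulrAC -exprSr.
by rewrite !sum_expr_lagr_den ?scale0r ?subr0 // ltnW.
Qed.

Lemma momentC (P : pred C) k :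
  (k.+3 <= #|` C|)%N -> moment P k = - moment (predC P) k.
Proof.
move=> /moment_predT; rewrite /moment (bigID P) /= => /eqP; rewrite addr_eq0 => /eqP.
by move=> ->; congr (- _); apply: eq_bigl => c.
Qed.

Lemma vdm_noninj t : ~~ injectiveb t -> vdm t = 0.
Proof.
case/injectivePn => i1 [i2 ne e]; apply: (determinant_alternate ne) => j.
by rewrite !mxE e.
Qed.

Definition vdm_sign : K := \prod_(i < d) \prod_(j < d | (i < j)%N) (-1).

Definition enum_vdm S : 'M[K]_d := \matrix_(k, j) S`_k ^+ j.

Lemma big_injective_tuple (R : Type) (idx : R) (op : Monoid.com_law idx)
    S t (F : K -> R) :
  injectiveb t -> (forall i, val (t i) \in S) -> #|` S| = d ->
  \big[op/idx]_i F (val (t i)) = \big[op/idx]_(s <- S) F s.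
Proof.
move=> /injectiveP tinj tS cardS; rewrite -(big_map (fun i => val (t i)) xpredT F).
have uniq_t : uniq [seq val (t i) | i <- index_enum 'I_d].
  by rewrite map_inj_uniq ?index_enum_uniq // => i j /val_inj/tinj.
apply/perm_big/uniq_perm; rewrite ?fset_uniq //.
have sub_t : {subset [seq val (t i) | i <- index_enum 'I_d] <= S}.
  by move=> x /mapP[i _ ->]; apply: tS.
have size_t : (size S <= size [seq val (t i) | i <- index_enum 'I_d])%N.
  by rewrite size_map /index_enum unlock -enumT -cardT card_ord cardS.
exact: (uniq_min_size uniq_t sub_t size_t).2.
Qed.

Lemma tuple_termE S t : t \in family (valued_in S) -> #|` S| = d ->
  tuple_term t = (vdm t * \prod_i val (t i) ^+ i) *: \prod_(s <- S) lagr_lin C s.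
Proof.
move=> /familyP tS cardS; rewrite /tuple_term.
have [tinj|/vdm_noninj->] := boolP (injectiveb t); last by rewrite !mul0r !scale0r.
by rewrite scaler_prod scalerA (big_injective_tuple _ _ tinj tS cardS).
Qed.

Lemma sum_fsub_nth S (F : K -> K) : S `<=` C -> #|` S| = d ->
  \sum_(c : C | val c \in S) F (val c) = \sum_(k < d) F S`_k.
Proof.
move=> SC cardS; rewrite -(big_seq_fsetE _ C (mem S) F) big_fset_condE.
rewrite (_ : [fset c in C | c \in S] = S); last first.
  by apply/fsetP => x; rewrite !inE andbC; case: (boolP (x \in S)) => // /(fsubsetP SC).
by rewrite (big_nth 0) cardS big_mkord.
Qed.

Lemma sum_vdm_fset S : S `<=` C -> #|` S| = d ->
  \sum_(t in family (valued_in S)) vdm t * \prod_i val (t i) ^+ i =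
  \det (enum_vdm S) ^+ 2.
Proof.
move=> SC cardS.
have := sum_vdm_family (V := K^o) (valued_in S) (fun i c => val c ^+ i).
move=> /= ->; rewrite expr2 -{1}det_tr -det_mulmx.
apply: eq_bigr => s _; congr (_ * _); apply: eq_bigr => i _.
rewrite (sum_fsub_nth (fun x => x ^+ s i * x ^+ i)) // !mxE.
by apply: eq_bigr => k _; rewrite !mxE mulrC.
Qed.

Lemma big_fsetD1_nth (R : Type) (idx : R) (op : Monoid.com_law idx) S
    (k : 'I_d) (F : K -> R) : #|` S| = d ->
  \big[op/idx]_(s <- S `\ S`_k) F s = \big[op/idx]_(l < d | l != k) F S`_l.
Proof.
move=> cardS; rewrite (_ : S `\ S`_k = [fset s in S | s != S`_k]); last first.
  by apply/fsetP => x; rewrite !inE andbC.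
rewrite -big_fset_condE (big_nth 0) cardS big_mkord; apply: eq_bigl => l.
by rewrite nth_uniq ?fset_uniq ?cardS.
Qed.

Lemma Rdisc_enum_vdm S : #|` S| = d -> Rdisc S = vdm_sign * \det (enum_vdm S) ^+ 2.
Proof.
move=> cardS; rewrite /Rdisc (big_nth 0) cardS big_mkord.
under eq_bigr => k _ do rewrite big_fsetD1_nth // (bigID (fun l : 'I_d => (k < l)%N)) /=.
have det_enum : \det (enum_vdm S) = \prod_(i < d) \prod_(j < d | (i < j)%N) (S`_j - S`_i).
  have -> : enum_vdm S = (Vandermonde d (\row_k S`_k))^T.
    by apply/matrixP => i j; rewrite !mxE.
  by rewrite det_tr det_Vandermonde; under eq_bigr do under eq_bigr do rewrite !mxE.
rewrite big_split /= expr2 mulrA det_enum; congr (_ * _).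
  rewrite /vdm_sign -big_split /=; apply: eq_bigr => i _; rewrite -big_split /=.
  rewrite (eq_bigl (fun j : 'I_d => (i < j)%N)) => [|j]; last first.
    by apply/andb_idl => ij; apply: contraTneq ij => ->; rewrite ltnn.
  by apply: eq_bigr => j _; rewrite mulN1r opprB.
rewrite [RHS](exchange_big_dep xpredT) //=; apply: eq_bigr => i _.
by apply: eq_bigl => j; rewrite -leqNgt ltn_neqAle.
Qed.

Lemma lagr_weight_tuples S : S `<=` C -> #|` S| = d ->
  lagr_weight C S = vdm_sign *: \sum_(t in family (valued_in S)) tuple_term t.
Proof.
move=> SC cardS; under eq_bigr => t tS do rewrite (tuple_termE tS cardS).
by rewrite -scaler_suml sum_vdm_fset // scalerA -Rdisc_enum_vdm // -lagr_weight_lagr_lin.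
Qed.

End Tuples.

Arguments valued_in {K C d} S.

Section DisjointSplit.
Variables (K : fieldType) (A B : {fset K}) (d : nat).
Local Notation C := (A `|` B).
Implicit Types (t : {ffun 'I_d -> C}) (S : {set 'I_d}).

Definition inA t : {set 'I_d} := [set i | val (t i) \in A].

Definition side S (i : 'I_d) : pred C := fun c => (val c \in A) == (i \in S).

Definition tuple_sum p : {poly K} := \sum_(t | #|inA t| == p) tuple_term t.

Lemma moment_side S (i : 'I_d) k : (k.+3 <= #|` C|)%N ->
  moment (side S i) k = (-1) ^+ (i \in S) *: moment (side set0 i) k.
Proof.
move=> hk; case: (boolP (i \in S)) => iS; last first.
  by rewrite scale1r; apply: eq_bigl => c; rewrite /side inE (negbTE iS).
rewrite scaleN1r (momentC (side S i) hk); congr (- _).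
by apply: eq_bigl => c; rewrite /side /= inE iS eqb_id eqbF_neg.
Qed.

Lemma family_side t S : (t \in family (side S)) = (inA t == S).
Proof.
apply/familyP/eqP => [tS|<- i]; last by rewrite unfold_in /side inE eqxx.
by apply/setP => i; have := tS i; rewrite unfold_in /side inE => /eqP.
Qed.

Section Flip.
Hypothesis hd : (2 * d < #|` C|)%N.

Lemma sum_family_side S :
  \sum_(t in family (side S)) tuple_term t =
  (-1) ^+ #|S| *: \sum_(t in family (side set0)) tuple_term t.
Proof.
rewrite !sum_tuple_term_family scaler_sumr; apply: eq_bigr => s _.
rewrite scalerA mulrC -scalerA; congr (_ *: _).
have bound i : ((s i + i).+3 <= #|` C|)%N.
  by have := ltn_ord (s i); have := ltn_ord i; lia.
under eq_bigr => i _ do rewrite (moment_side _ _ (bound i)).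
rewrite scaler_prod; congr (_ *: _).
rewrite (bigID (mem S)) /= [X in _ * X]big1 => [|i /negbTE->//].
by rewrite mulr1 (eq_bigr (fun=> -1)) => [|i ->//]; rewrite prodr_const.
Qed.

Lemma tuple_sum_sign p : tuple_sum p = ((-1) ^+ p * 'C(d, p)%:R) *: tuple_sum 0.
Proof.
have tuple_sumE q : tuple_sum q =
    ('C(d, q)%:R * (-1) ^+ q) *: \sum_(t in family (side set0)) tuple_term t.
  rewrite /tuple_sum (partition_big inA [pred S : {set 'I_d} | #|S| == q]) //=.
  under eq_bigr => S cardS.
    rewrite (eq_bigl (fun t => t \in family (side S))) => [|t]; last first.
      by rewrite family_side andb_idl // => /eqP->.
    rewrite sum_family_side (eqP cardS); over.
  rewrite /= sumr_const scalerMnl -mulr_natl; congr ((_ * _) *: _).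
  rewrite -[d in 'C(d, _)]card_ord -card_draws; congr (_%:R).
  by apply: eq_card => S; rewrite !inE.
by rewrite !tuple_sumE bin0 mulr1 scale1r mulrC.
Qed.

End Flip.

Hypothesis dAB : [disjoint A & B].

Definition tuple_fset S t : {fset K} := [fset x in [seq val (t i) | i <- enum S]].

Lemma tuple_fsetP S t x :
  reflect (exists2 i, i \in S & val (t i) = x) (x \in tuple_fset S t).
Proof.
rewrite in_fset /=; apply: (iffP mapP) => [[i iS ->]|[i iS <-]].
  by exists i; rewrite // -mem_enum.
by exists i; rewrite ?mem_enum.
Qed.

Lemma card_tuple_fset S t : injectiveb t -> #|` tuple_fset S t| = #|S|.
Proof.
move=> /injectiveP tinj; rewrite card_fseq undup_id ?size_map -?cardE //.
by rewrite map_inj_uniq ?enum_uniq // => i j /val_inj/tinj.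
Qed.

Lemma family_fsetU t A' B' : A' `<=` A -> B' `<=` B ->
  (t \in family (valued_in (A' `|` B'))) =
  (tuple_fset (inA t) t `<=` A') && (tuple_fset (~: inA t) t `<=` B').
Proof.
move=> /fsubsetP sA /fsubsetP sB.
have notAB x : x \in A -> x \notin B by move=> xA; apply: (fdisjointP dAB).
apply/familyP/andP => [tS|[/fsubsetP sRA /fsubsetP sRB] i]; last first.
  rewrite unfold_in /= in_fsetU; case: (boolP (i \in inA t)) => iA.
    by apply/orP; left; apply/sRA/tuple_fsetP; exists i.
  by apply/orP; right; apply/sRB/tuple_fsetP; exists i; first rewrite inE.
split; apply/fsubsetP => x /tuple_fsetP[i]; rewrite !inE => iA <-;
  have := tS i; rewrite unfold_in /= in_fsetU.
  by case/orP => // /sB; rewrite (negPf (notAB _ iA)).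
by case/orP => // /sA; rewrite (negPf iA).
Qed.

Lemma sum_split_family t p q : (p + q = d)%N ->
  \sum_(A' <- fpowerset A | #|` A'| == p) \sum_(B' <- fpowerset B | #|` B'| == q)
    (if t \in family (valued_in (A' `|` B')) then tuple_term t else 0)
  = if #|inA t| == p then tuple_term t else 0.
Proof.
move=> pqd; have [tinj|/vdm_noninj v0] := boolP (injectiveb t); last first.
  rewrite /tuple_term v0 scale0r if_same big1 // => A' _.
  by rewrite big1 // => B' _; rewrite if_same.
set RA := tuple_fset (inA t) t; set RB := tuple_fset (~: inA t) t.
have sRA : RA `<=` A by apply/fsubsetP => x /tuple_fsetP[i]; rewrite inE => iA <-.
have sRB : RB `<=` B.
  apply/fsubsetP => x /tuple_fsetP[i]; rewrite !inE => iA <-.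
  by move: (fsvalP (t i)); rewrite in_fsetU (negbTE iA).
have cardRA : #|` RA| = #|inA t| by rewrite card_tuple_fset.
have cardRB : #|` RB| = (d - #|inA t|)%N.
  by rewrite card_tuple_fset // cardsCs setCK card_ord.
have inA_le : (#|inA t| <= d)%N.
  by have := subset_leq_card (subsetT (inA t)); rewrite cardsT card_ord.
have -> : (#|inA t| == p) = (#|` RB| == q) && (#|` RA| == p).
  by rewrite cardRA cardRB; case: eqP => [->|]; case: eqP => //; lia.
rewrite big_seq_cond (eq_bigr (fun A' =>
  if #|` RB| == q then (if A' == RA then tuple_term t else 0) else 0)); last first.
  move=> A' /andP[]; rewrite fpowersetE => sA' /eqP cardA'.
  rewrite -(@sum_fpowerset_eq1 _ _ _ _ (fun B' => #|` B'| == q)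
              (if A' == RA then tuple_term t else 0) sRB).
  rewrite big_seq_cond [RHS]big_seq_cond; apply: eq_bigr => B'.
  rewrite fpowersetE => /andP[sB' /eqP cardB'].
  rewrite family_fsetU // fsubset2_eq ?cardA' ?cardB' ?cardRA ?cardRB; last by lia.
  by case: (A' == RA); case: (B' == RB).
case: (#|` RB| == q); last by rewrite big1.
by rewrite -big_seq_cond sum_fpowerset_eq1.
Qed.

Lemma lagr_weight_sum_tuple_sum p q : (p + q = d)%N ->
  lagr_weight_sum A B p q = vdm_sign K d *: tuple_sum p.
Proof.
move=> pqd; rewrite /lagr_weight_sum (eq_sum_fpowerset2 (G := fun A' B' => vdm_sign K d *:
    \sum_(t : {ffun 'I_d -> C}) if t \in family (valued_in (A' `|` B'))
            then tuple_term t else 0)); last first.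
  move=> A' B' sA' sB' cA' cB'.
  rewrite -big_mkcond (lagr_weight_tuples (d := d)) ?fsetUSS //.
  have /eqP AB0 : A' `&` B' == fset0 by rewrite fsetI_eq0 (fdisjoint_subsets dAB).
  by rewrite cardfsU AB0 cardfs0 subn0 cA' cB'.
under eq_bigr do rewrite -scaler_sumr; rewrite -scaler_sumr; congr (_ *: _).
under eq_bigr do rewrite exchange_big; rewrite exchange_big /tuple_sum [RHS]big_mkcond.
by apply: eq_bigr => t _; rewrite sum_split_family.
Qed.

End DisjointSplit.

Lemma odd_sign_exponents (m p q : nat) : (p + q <= m)%N ->
  odd (q * (m - p) + p) = odd (p * (m - (p + q)) + (p + q) * m).
Proof.
move=> /subnKC <-; set k := (m - (p + q))%N.
have -> : (p + q + k - p = q + k)%N by rewrite -addnA addKn.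
rewrite addKn !(oddD, oddM).
by case: (odd p); case: (odd q); case: (odd k).
Qed.

Lemma Syl_disjoint (K : fieldType) (A B : {fset K}) (p q : nat) :
  [disjoint A & B] -> (p + q < #|` A|)%N -> (p + q < #|` B|)%N ->
  Syl p q A B =
    ((-1) ^+ (p * (#|` A| - (p + q))) * ('C(p + q, p))%:R) *: Syl 0 (p + q) A B.
Proof.
move=> dAB hA hB; have hd : (2 * (p + q) < #|` A `|` B|)%N.
  have /eqP AB0 : A `&` B == fset0 by rewrite fsetI_eq0.
  by rewrite cardfsU AB0 cardfs0 subn0 mul2n -addnn (leq_add hA (ltnW hB)).
rewrite !Syl_lagr_weight_sum // (lagr_weight_sum_tuple_sum dAB (erefl (p + q)%N)).
rewrite (lagr_weight_sum_tuple_sum dAB (add0n (p + q)%N)) (tuple_sum_sign hd).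
have sgn : (-1) ^+ (q * (#|` A| - p)) * (-1) ^+ p =
    (-1) ^+ (p * (#|` A| - (p + q))) * (-1) ^+ ((p + q) * (#|` A| - 0)) :> K.
  by rewrite -!exprD -signr_odd -[RHS]signr_odd subn0 odd_sign_exponents // ltnW.
rewrite !scalerA; congr (_ *: _).
transitivity ((-1) ^+ (q * (#|` A| - p)) * (-1) ^+ p *
  (Rres A B * vdm_sign K (p + q) * 'C(p + q, p)%:R)); first by ring.
by rewrite sgn; ring.
Qed.

(** * Reduction to the disjoint case *)

Section SylOverRing.
Variables (K : fieldType) (R : comUnitRingType) (al be : K -> R).
Implicit Types Y Z : {fset K}.

Definition RresF (f g : K -> R) Y Z : R := \prod_(y <- Y) \prod_(z <- Z) (f y - g z).

Definition RresXF (f : K -> R) Z : {poly R} := \prod_(z <- Z) ('X - (f z)%:P).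

Definition SylF (p q : nat) (A B : {fset K}) : {poly R} :=
  \sum_(A' <- fpowerset A | #|` A'| == p) \sum_(B' <- fpowerset B | #|` B'| == q)
    ((RresF al be A' B' * RresF al be (A `\` A') (B `\` B')) /
       (RresF al al A' (A `\` A') * RresF be be B' (B `\` B')))
      *: (RresXF al A' * RresXF be B').

End SylOverRing.

Lemma eq_SylF (K : fieldType) (R : comUnitRingType) (al al' be be' : K -> R) p q A B :
  al =1 al' -> be =1 be' -> SylF al be p q A B = SylF al' be' p q A B.
Proof.
move=> eal ebe.
have eR (f f' g g' : K -> R) Y Z : f =1 f' -> g =1 g' -> RresF f g Y Z = RresF f' g' Y Z.
  by move=> ef eg; apply: eq_bigr => y _; apply: eq_bigr => z _; rewrite ef eg.
have eX (f f' : K -> R) Z : f =1 f' -> RresXF f Z = RresXF f' Z.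
  by move=> ef; apply: eq_bigr => z _; rewrite ef.
apply: eq_bigr => A' _; apply: eq_bigr => B' _.
by rewrite !(eR al al' be be', eR al al' al al', eR be be' be be', eX al al', eX be be').
Qed.

Lemma map_SylF (K : fieldType) (R S : comUnitRingType) (f : {rmorphism R -> S})
    (al be : K -> R) p q (A B : {fset K}) :
  (forall A', A' `<=` A -> RresF al al A' (A `\` A') \is a GRing.unit) ->
  (forall B', B' `<=` B -> RresF be be B' (B `\` B') \is a GRing.unit) ->
  map_poly f (SylF al be p q A B) = SylF (f \o al) (f \o be) p q A B.
Proof.
move=> unitA unitB.
have fR (g h : K -> R) Y Z : f (RresF g h Y Z) = RresF (f \o g) (f \o h) Y Z.
  rewrite rmorph_prod; apply: eq_bigr => y _.
  by rewrite rmorph_prod; apply: eq_bigr => z _; rewrite rmorphB.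
have fX (g : K -> R) Z : map_poly f (RresXF g Z) = RresXF (f \o g) Z.
  rewrite /RresXF (_ : map_poly f (\prod_(z <- Z) _) =
                      \prod_(z <- Z) map_poly f ('X - (g z)%:P)).
    by apply: eq_bigr => z _; rewrite map_polyXsubC.
  exact: rmorph_prod.
rewrite rmorph_sum; under eq_bigr do rewrite rmorph_sum.
apply: eq_sum_fpowerset2 => A' B' sA' sB' _ _.
rewrite /= map_polyZ; congr (_ *: _); last by rewrite rmorphM /= !fX.
by rewrite rmorphM rmorphV ?unitrM ?unitA ?unitB // !rmorphM !fR.
Qed.

Lemma SylF_imfset (K L : fieldType) (f g : K -> L) p q (A B : {fset K}) :
  injective f -> injective g -> SylF f g p q A B = Syl p q (f @` A) (g @` B).
Proof.
move=> f_inj g_inj.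
have eR (h h' : K -> L) Y Z : injective h -> injective h' ->
    Rres (h @` Y) (h' @` Z) = RresF h h' Y Z.
  move=> h_inj h'_inj; rewrite /Rres big_imfset_inj //.
  by apply: eq_bigr => y _; rewrite big_imfset_inj.
have eX (h : K -> L) Y : injective h -> RresX (h @` Y) = RresXF h Y.
  by move=> h_inj; rewrite /RresX big_imfset_inj.
rewrite /Syl (sum_fpowerset_imfset f_inj).
under eq_bigr do rewrite (sum_fpowerset_imfset g_inj).
apply: eq_sum_fpowerset2 => A' B' _ _ _ _.
by rewrite -!imfsetD // !eR // !eX.
Qed.

Section ShiftDeformation.
Variable K : fieldType.
Implicit Types A B Y Z : {fset K}.

Definition shiftX (b : K) : {poly K} := b%:P + 'X.

Lemma RresF_polyC (al : K -> {poly K}) Y Z :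
  (forall a b, al a - al b = (a - b)%:P) -> RresF al al Y Z = (Rres Y Z)%:P.
Proof.
move=> al_diff; rewrite rmorph_prod; apply: eq_bigr => y _.
by rewrite rmorph_prod; apply: eq_bigr => z _; rewrite al_diff.
Qed.

Lemma RresF_polyC_unit (al : K -> {poly K}) A A' :
  (forall a b, al a - al b = (a - b)%:P) -> RresF al al A' (A `\` A') \is a GRing.unit.
Proof.
move=> al_diff; rewrite RresF_polyC // poly_unitE size_polyC coefC /= unitfE.
by rewrite Rres_neq0 // fdisjointXD.
Qed.

Lemma shiftX_diff (a b : K) : shiftX a - shiftX b = (a - b)%:P.
Proof. by rewrite /shiftX rmorphB; ring. Qed.

Lemma map_SylF_shift (S : comUnitRingType) (f : {rmorphism {poly K} -> S}) p q A B :
  map_poly f (SylF (@polyC K) shiftX p q A B) = SylF (f \o polyC) (f \o shiftX) p q A B.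
Proof.
by apply: map_SylF => X _; apply: RresF_polyC_unit => a b; rewrite ?shiftX_diff ?rmorphB.
Qed.

Lemma map_eval0_SylF p q A B :
  map_poly (horner_eval 0) (SylF (@polyC K) shiftX p q A B) = Syl p q A B.
Proof.
rewrite map_SylF_shift; apply: (@eq_SylF _ _ _ id _ id) => a /=.
  by rewrite /horner_eval hornerC.
by rewrite /horner_eval /shiftX hornerD hornerC hornerX addr0.
Qed.

Local Notation tofracP := (@tofrac {poly K}).

Lemma tofrac_inj : injective tofracP.
Proof. by move=> x y /eqP; rewrite tofrac_eq => /eqP. Qed.

Lemma tofrac_polyC_inj : injective (tofracP \o polyC).
Proof. by move=> a b /tofrac_inj/polyC_inj. Qed.

Lemma tofrac_shiftX_inj : injective (tofracP \o shiftX).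
Proof.
move=> a b /tofrac_inj/eqP; rewrite -subr_eq0 shiftX_diff polyC_eq0 subr_eq0.
exact/eqP.
Qed.

Lemma map_tofrac_SylF p q A B :
  map_poly tofracP (SylF (@polyC K) shiftX p q A B) =
  Syl p q ((tofracP \o polyC) @` A) ((tofracP \o shiftX) @` B).
Proof.
rewrite map_SylF_shift SylF_imfset //.
  exact: tofrac_polyC_inj.
exact: tofrac_shiftX_inj.
Qed.

Lemma fdisjoint_shift A B :
  [disjoint (tofracP \o polyC) @` A & (tofracP \o shiftX) @` B].
Proof.
apply/fdisjointP => _ /imfsetP[a /= _ ->]; apply/imfsetP => -[b /= _ /tofrac_inj ab].
have := congr1 (fun r : {poly K} => size r) ab.
by rewrite /shiftX addrC size_XaddC size_polyC; case: (a != 0).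
Qed.

End ShiftDeformation.

Theorem proposition3p3 (K : fieldType) (A B : {fset K}) (p q : nat) :
  (p <= #|` A|)%N -> (q <= #|` B|)%N ->
  (p + q < #|` A|)%N -> (p + q < #|` B|)%N ->
  Syl p q A B =
    ((-1) ^+ (p * (#|` A| - (p + q))) * ('C(p + q, p))%:R) *: Syl 0 (p + q) A B.
Proof.
move=> _ _ hA hB; set c := _ * _.
pose P r s := SylF (@polyC K) (@shiftX K) r s A B.
have deformed : P p q = c%:P *: P 0 (p + q)%N.
  apply: (map_inj_poly (@tofrac_inj K) (rmorph0 _)).
  rewrite map_polyZ !map_tofrac_SylF Syl_disjoint ?fdisjoint_shift
    ?(card_imfset_inj (@tofrac_polyC_inj K)) ?(card_imfset_inj (@tofrac_shiftX_inj K)) //.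
  by rewrite /c !rmorphM !rmorph_sign !rmorph_nat.
by rewrite -!map_eval0_SylF -/(P _ _) deformed map_polyZ /= /horner_eval hornerC.
Qed.
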